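(* Let $\varepsilon>0$, $m\in\mathbb{N}$ and $K,T>0$ with $T\ge K$. Let $A,B\in\mathbb{Z}$ with $A\neq 0$. Then \[ \sum_{\substack{ |k| \leq K \\ (Ak+B, m ) \leq T }} (Ak+B,m) \ll_\varepsilon m^\varepsilon (A,m)\, T, \] where $k$ ranges over integers.
   Context: $(u,v)$ denotes the greatest common divisor. *)

From Stdlib Require Import Reals ZArith List.
Open Scope R_scope.

Definition zrange (M : Z) : list Z :=
  map (fun n : nat => (Z.of_nat n - M)%Z) (seq 0 (Z.to_nat (2 * M + 1))).

(* S(m,K,T,A,B) = sum over integers k with |k| <= K and (Ak+B, m) <= T
   of (Ak+B, m).  Every integer k with |k| <= K satisfies |k| < up K,
   so it suffices to range over |k| <= |up K| and filter. *)
Definition gcd_sum (m : nat) (K T : R) (A B : Z) : R :=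
  fold_right Rplus 0
    (map (fun k => IZR (Z.gcd (A * k + B) (Z.of_nat m)))
       (filter (fun k =>
          if Rle_dec (IZR (Z.abs k)) K then
            if Rle_dec (IZR (Z.gcd (A * k + B) (Z.of_nat m))) T then true else false
          else false)
        (zrange (Z.abs (up K))))).

(* A term (Ak+B, m) <= T is itself a divisor d <= T of m with d | Ak+B, so the sum is at most
   the sum over such divisors d of d * #{|k| <= K : d | Ak+B}.  The solutions of d | Ak+B form
   an arithmetic progression of difference d/(A,d), so each divisor contributes at most
   2K(A,d) + d <= 3(A,m)T, and it remains to bound the number of divisors of m by C m^eps.
   Peeling off the prime powers p^a || m one at a time, a+1 <= (p^eps)^a as soon as p^eps >= 2,
   while each of the finitely many smaller primes costs at most the factor 1 + 1/(2^eps - 1)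
   by Bernoulli's inequality. *)

From Stdlib Require Import Reals ZArith Znumtheory List Lra Lia Sorting.Sorted.
From mathcomp Require Import ssreflect ssrbool.
From mathcomp Require eqtype ssrnat seq div prime.
Open Scope R_scope.

Lemma INR_succ_le_pow x a : 2 <= x -> INR (S a) <= x ^ a.
Proof.
move=> x_ge2; elim: a => [|a IHa]; first by rewrite /=; lra.
have : 1 <= INR (S a) by apply: (le_INR 1); lia.
rewrite [INR (S (S a))]S_INR [x ^ _]/=; nra.
Qed.

Lemma INR_succ_le_Bernoulli x a : 1 < x -> INR (S a) <= (1 + / (x - 1)) * x ^ a.
Proof.
move=> x_gt1; have [h h_gt0 ->] : exists2 h, 0 < h & x = 1 + h by exists (x - 1); lra.
have -> : 1 + h - 1 = h by ring.
have hV_gt0 := Rinv_0_lt_compat h h_gt0.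
apply: (Rle_trans _ ((1 + / h) * (1 + INR a * h))); last first.
  by apply: Rmult_le_compat_l; [lra | exact: poly].
have -> : (1 + / h) * (1 + INR a * h) = INR a + 1 + (INR a * h + / h) by field; lra.
have := Rmult_le_pos _ _ (pos_INR a) (Rlt_le _ _ h_gt0).
rewrite S_INR; lra.
Qed.

Lemma Rpower_pow_comm x e a : 0 < x -> Rpower (x ^ a) e = Rpower x e ^ a.
Proof.
move=> x_gt0; rewrite -Rpower_pow // -Rpower_pow; last exact: exp_pos.
by rewrite !Rpower_mult Rmult_comm.
Qed.

Lemma Rpower_1_l e : Rpower 1 e = 1.
Proof. by rewrite /Rpower ln_1 Rmult_0_r exp_0. Qed.

Lemma Rpower_unbounded b e : 0 < e -> exists N : nat, forall x, INR N <= x -> b <= Rpower x e.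
Proof.
move=> e_gt0; set B := Rmax 1 b.
have B_gt0 : 0 < B by have := Rmax_l 1 b; rewrite -/B; lra.
have [N hN] := INR_unbounded (Rpower B (/ e)).
exists N => x le_Nx; apply: (Rle_trans _ B); first exact: Rmax_r.
have <- : Rpower (Rpower B (/ e)) e = B.
  by rewrite Rpower_mult Rinv_l ?Rpower_1 //; lra.
apply: Rle_Rpower_l; first lra.
by split; [exact: exp_pos | lra].
Qed.

(* MathComp's arithmetic on nat is imported only inside this module, so that [(1 <= m)%nat]
   in the statement of [lemma15] keeps its Stdlib meaning. *)
Module DivisorBound.
Import eqtype ssrnat seq div prime.
Local Open Scope nat_scope.

Lemma size_divisors_mul m n :
  size (divisors (m * n)) <= size (divisors m) * size (divisors n).
Proof.
rewrite -(size_allpairs muln); apply: uniq_leq_size; first exact: divisors_uniq.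
move=> d; have [-> | mn_gt0] := posnP (m * n).
  by rewrite [divisors 0]/= mem_seq1 => /eqP->; apply/allpairsP; exists (1, 1); rewrite !divisor1.
have /andP[m_gt0 n_gt0] : (0 < m) && (0 < n) by rewrite -muln_gt0.
rewrite -dvdn_divisors // => d_mn.
have g_gt0 : 0 < gcdn d m by rewrite gcdn_gt0 m_gt0 orbT.
have d_gn : d %| gcdn d m * n by rewrite muln_gcdl dvdn_gcd d_mn dvdn_mulr.
apply/allpairsP; exists (gcdn d m, d %/ gcdn d m); split => /=.
- by rewrite -dvdn_divisors // dvdn_gcdr.
- by rewrite -dvdn_divisors // -(dvdn_pmul2l g_gt0) mulnC divnK ?dvdn_gcdl.
- by rewrite mulnC divnK ?dvdn_gcdl.
Qed.

Lemma size_divisors_pfactor p a : prime p -> size (divisors (p ^ a)) <= a.+1.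
Proof.
move=> p_pr; rewrite -(size_iota 0 a.+1) -(size_map (expn p) (iota 0 a.+1)).
apply: uniq_leq_size; first exact: divisors_uniq.
move=> d; rewrite -dvdn_divisors ?expn_gt0 ?prime_gt0 // => /(dvdn_pfactor _ _ p_pr)[j le_ja ->].
by rewrite map_f // mem_iota.
Qed.

Lemma count_primes_pfactor_mul (P : pred nat) p a n : prime p -> 0 < a -> 0 < n ->
  ~~ (p %| n) -> count P (primes (p ^ a * n)) = P p + count P (primes n).
Proof.
move=> p_pr a_gt0 n_gt0 p_n.
suff /permP -> : perm_eq (primes (p ^ a * n)) (p :: primes n) by [].
apply: uniq_perm; rewrite ?primes_uniq //=.
  by rewrite primes_uniq andbT mem_primes p_pr n_gt0.
have pa_gt0 : 0 < p ^ a by rewrite expn_gt0 prime_gt0.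
by move=> q; rewrite primesM // primesX // primes_prime // mem_seq1 in_cons.
Qed.

Lemma INR_expn p a : INR (p ^ a) = (INR p ^ a)%R.
Proof. by elim: a => [|a IHa] //; rewrite expnS mult_INR IHa. Qed.

Lemma count_ltn_uniq s N : uniq s -> count (fun x => x < N) s <= N.
Proof.
move=> s_uniq; rewrite -size_filter -[N in _ <= N](size_iota 0 N).
apply: uniq_leq_size; first exact: filter_uniq.
by move=> x; rewrite mem_filter mem_iota => /andP[].
Qed.

Section SmallPrimeFactors.
Variables (eps c : R) (N : nat).
Hypothesis pfactor_bound :
  forall p a, prime p -> (INR a.+1 <= c ^ (p < N) * Rpower (INR p) eps ^ a)%R.

Lemma size_divisors_small_primes m : 0 < m ->
  (INR (size (divisors m)) <= c ^ count (fun p => (p < N)%N) (primes m) * Rpower (INR m) eps)%R.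
Proof.
elim/ltn_ind: m => m IH m_gt0.
have [m_le1 | m_gt1] := leqP m 1.
  have -> : m = 1 by apply/eqP; rewrite eqn_leq m_le1.
  by rewrite /= Rpower_1_l; lra.
have p_pr := pdiv_prime m_gt1; set p := pdiv m in p_pr.
have [n p_n m_eq] := pfactor_coprime p_pr m_gt0.
set a := logn p m in m_eq.
have a_gt0 : 0 < a by rewrite logn_gt0 mem_primes p_pr m_gt0 pdiv_dvd.
have n_gt0 : 0 < n by move: m_gt0; rewrite m_eq muln_gt0 => /andP[].
have n_lt_m : n < m by rewrite m_eq ltn_Pmulr // -(exp1n a) ltn_exp2r // prime_gt1.
have IHn := IH n n_lt_m n_gt0.
have p_gt0 : (0 < INR p)%R by apply/lt_0_INR/ltP/prime_gt0.
have n_gt0R : (0 < INR n)%R by apply/lt_0_INR/ltP.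
have tau_le : (INR (size (divisors (p ^ a * n))) <= INR a.+1 * INR (size (divisors n)))%R.
  rewrite -mult_INR multE; apply/le_INR/leP/(leq_trans (size_divisors_mul _ _)).
  by rewrite leq_mul2r size_divisors_pfactor ?orbT.
rewrite m_eq mulnC count_primes_pfactor_mul -?prime_coprime // mult_INR INR_expn.
rewrite -Rpower_mult_distr ?Rpower_pow_comm ?pow_add //; last exact: pow_lt.
apply: (Rle_trans _ _ _ tau_le).
apply: (Rle_trans _ _ _ (Rmult_le_compat _ _ _ _ (pos_INR _) (pos_INR _) (pfactor_bound p a p_pr) IHn)).
by right; ring.
Qed.

End SmallPrimeFactors.

Theorem divisor_bound eps : (0 < eps)%R ->
  exists C, (0 < C)%R /\
    forall m, (0 < m)%coq_nat -> (INR (size (divisors m)) <= C * Rpower (INR m) eps)%R.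
Proof.
move=> eps_gt0; have [N N_large] := Rpower_unbounded 2%R _ eps_gt0.
set x := Rpower 2 eps.
have x_gt1 : (1 < x)%R by rewrite -(Rpower_O 2); [apply: Rpower_lt; lra | lra].
set c := (1 + / (x - 1))%R.
have c_ge1 : (1 <= c)%R by have := Rinv_0_lt_compat (x - 1); rewrite /c; lra.
exists (c ^ N)%R; split; first by apply: pow_lt; lra.
move=> m /ltP m_gt0; apply: (Rle_trans _ _ _ (size_divisors_small_primes eps c N _ m m_gt0)).
  move=> p a p_pr; have p_ge2 : (2 <= INR p)%R by apply: (le_INR 2); apply/leP/prime_gt1.
  case: (ltnP p N) => [p_lt_N | p_ge_N]; rewrite [(c ^ _)%R]/=.
  - rewrite Rmult_1_r; apply: (Rle_trans _ _ _ (INR_succ_le_Bernoulli _ a x_gt1)).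
    apply: Rmult_le_compat_l; first by rewrite -/c; lra.
    apply: pow_incr; split; first lra.
    by apply: Rle_Rpower_l; [lra | split; lra].
  - by rewrite Rmult_1_l; apply/INR_succ_le_pow/N_large/le_INR/leP.
apply/Rmult_le_compat_r; first exact/Rlt_le/exp_pos.
by apply: Rle_pow => //; apply/leP/count_ltn_uniq/primes_uniq.
Qed.

Lemma length_size (T : Type) (s : seq T) : length s = size s.
Proof. by elim: s => //= x s ->. Qed.

Lemma InP (T : eqType) (x : T) (s : seq T) : reflect (In x s) (x \in s).
Proof.
elim: s => [|y s IHs]; first by constructor.
rewrite in_cons; apply: (iffP orP) => [[/eqP-> | /IHs] | [-> | /IHs]]; by [left | right].
Qed.

Lemma In_divisors m d : (0 < m)%coq_nat -> In d (divisors m) <-> (Z.of_nat d | Z.of_nat m)%Z.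
Proof.
move=> m_pos; have /ltP m_gt0 := m_pos; split => [/InP | [z m_eq]].
  by rewrite -dvdn_divisors // => /dvdnP[k ->]; exists (Z.of_nat k); rewrite -multE Nat2Z.inj_mul.
apply/InP; rewrite -dvdn_divisors //; apply/dvdnP; exists (Z.to_nat z).
by apply: Nat2Z.inj; rewrite -multE Nat2Z.inj_mul Z2Nat.id //; nia.
Qed.

End DivisorBound.

Definition sumR {X : Type} (f : X -> R) (l : list X) : R := fold_right Rplus 0 (map f l).

Lemma sumR_nil X (f : X -> R) : sumR f nil = 0.
Proof. by []. Qed.

Lemma sumR_cons X (f : X -> R) x l : sumR f (x :: l) = f x + sumR f l.
Proof. by []. Qed.

Lemma sumR_le X (f g : X -> R) l :
  (forall x, In x l -> f x <= g x) -> sumR f l <= sumR g l.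
Proof.
elim: l => [|x l IHl] le_fg; rewrite ?sumR_nil ?sumR_cons; first lra.
have := le_fg x (in_eq x l); have := IHl (fun y y_l => le_fg y (in_cons x y l y_l)); lra.
Qed.

Lemma sumR_zero X (l : list X) : sumR (fun _ => 0) l = 0.
Proof. by elim: l => [|x l IHl]; rewrite ?sumR_nil ?sumR_cons ?IHl; lra. Qed.

Lemma sumR_add X (f g : X -> R) l : sumR (fun x => f x + g x) l = sumR f l + sumR g l.
Proof. by elim: l => [|x l IHl]; rewrite ?sumR_nil ?sumR_cons ?IHl; lra. Qed.

Lemma sumR_ge_elem X (f : X -> R) l x :
  (forall y, In y l -> 0 <= f y) -> In x l -> f x <= sumR f l.
Proof.
elim: l => [|y l IHl] f_ge0 //= [<- | x_l]; rewrite sumR_cons.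
  by have := sumR_le _ _ _ _ (fun z z_l => f_ge0 z (in_cons y z l z_l)); rewrite sumR_zero; lra.
by have := f_ge0 y (in_eq y l); have := IHl (fun z z_l => f_ge0 z (in_cons y z l z_l)) x_l; lra.
Qed.

Lemma sumR_swap X Y (h : X -> Y -> R) (l : list X) (s : list Y) :
  sumR (fun x => sumR (h x) s) l = sumR (fun y => sumR (fun x => h x y) l) s.
Proof.
elim: l => [|x l IHl]; first by rewrite sumR_nil sumR_zero.
by rewrite sumR_cons IHl -sumR_add.
Qed.

Lemma sumR_indicator X (P : X -> bool) c l :
  sumR (fun x => if P x then c else 0) l = c * INR (length (filter P l)).
Proof.
elim: l => [|x l IHl]; rewrite ?sumR_nil ?sumR_cons; first by rewrite /=; lra.
by rewrite [filter _ _]/=; case: (P x); rewrite [length _]/= ?S_INR IHl; lra.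
Qed.

Lemma sumR_le_const X (f : X -> R) c l :
  (forall x, In x l -> f x <= c) -> sumR f l <= INR (length l) * c.
Proof.
move=> le_fc; apply: (Rle_trans _ (sumR (fun _ => c) l)); first exact: sumR_le.
right; elim: l {le_fc} => [|x l IHl]; rewrite ?sumR_nil ?sumR_cons ?IHl; first by rewrite /=; lra.
by rewrite [length (_ :: _)]/= S_INR; lra.
Qed.

Lemma StronglySorted_filter X (Rel : X -> X -> Prop) (P : X -> bool) l :
  StronglySorted Rel l -> StronglySorted Rel (filter P l).
Proof.
elim: l => [|x l IHl] //= x_l_sorted.
have [l_sorted x_l] := StronglySorted_inv x_l_sorted.
case: (P x); last exact: IHl.
constructor; first exact: IHl.
by apply/Forall_forall => y /filter_In[y_l _]; move/Forall_forall: x_l; apply.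
Qed.

Lemma spaced_length_le (l : list Z) (x y delta : R) :
  StronglySorted Z.lt l ->
  (forall k k', In k l -> In k' l -> (k < k')%Z -> IZR k + delta <= IZR k') ->
  (forall k, In k l -> x <= IZR k <= y) -> x <= y + delta ->
  INR (length l) * delta <= y - x + delta.
Proof.
elim: l x => [|k l IHl] x k_l_sorted spaced l_in x_le; first by rewrite /=; lra.
have [l_sorted k_l] := StronglySorted_inv k_l_sorted.
have [x_le_k k_le_y] := l_in k (in_eq k l).
suff : INR (length l) * delta <= y - (IZR k + delta) + delta.
  by rewrite [length (_ :: _)]/= S_INR; lra.
apply: IHl => //; last lra.
  by move=> k1 k2 k1_l k2_l; apply: spaced; right.
move=> k' k'_l; split; last by have := l_in k' (in_cons k k' l k'_l); lra.
by apply: spaced; [left | right | move/Forall_forall: k_l; apply].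
Qed.

Lemma Z_gcd_pos_r a b : b <> 0%Z -> (0 < Z.gcd a b)%Z.
Proof. by move=> b_neq0; have := Z.gcd_nonneg a b; have := Z.gcd_eq_0_r a b; lia. Qed.

Lemma linear_congruence_period (A B d k k' : Z) : (0 < d)%Z ->
  (d | A * k + B)%Z -> (d | A * k' + B)%Z -> (d / Z.gcd A d | k' - k)%Z.
Proof.
move=> d_gt0 d_k d_k'; set g := Z.gcd A d.
have g_gt0 : (0 < g)%Z by apply: Z_gcd_pos_r; lia.
have A_eq := Zdivide_Zdiv_eq g A g_gt0 (Z.gcd_divide_l A d).
have d_eq := Zdivide_Zdiv_eq g d g_gt0 (Z.gcd_divide_r A d).
apply: (Z.gauss _ (A / g)); last first.
  by rewrite Z.gcd_comm; apply: Z.gcd_div_gcd; lia.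
apply/(Z.mul_divide_cancel_l _ _ g); first lia.
rewrite -d_eq Z.mul_assoc -A_eq.
have -> : (A * (k' - k) = (A * k' + B) - (A * k + B))%Z by ring.
exact: Z.divide_sub_r.
Qed.

Lemma linear_congruence_count (A B d : Z) (K : R) (L : list Z) :
  (0 < d)%Z -> 0 <= K -> StronglySorted Z.lt L -> (forall k, In k L -> -K <= IZR k <= K) ->
  IZR d * INR (length (filter (fun k => (A * k + B) mod d =? 0)%Z L))
    <= 2 * K * IZR (Z.gcd A d) + IZR d.
Proof.
move=> d_gt0 K_ge0 L_sorted L_in.
set g := Z.gcd A d; set q := (d / g)%Z; set S := filter _ L.
have g_gt0 : (0 < g)%Z by apply: Z_gcd_pos_r; lia.
have d_eq : d = (g * q)%Z := Zdivide_Zdiv_eq _ _ g_gt0 (Z.gcd_divide_r A d).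
have q_gt0 : (0 < q)%Z by nia.
have S_sol k : In k S -> (d | A * k + B)%Z.
  by case/filter_In => _ /Z.eqb_eq /Z.mod_divide; apply; lia.
have count_le : INR (length S) * IZR q <= K - - K + IZR q.
  apply: spaced_length_le; first exact: StronglySorted_filter.
  - move=> k k' k_S k'_S k_lt_k'; rewrite -plus_IZR; apply: IZR_le.
    have := linear_congruence_period _ _ _ _ _ d_gt0 (S_sol k k_S) (S_sol k' k'_S).
    move/(Z.divide_pos_le _ (k' - k) ltac:(lia)); rewrite -/g -/q; lia.
  - by move=> k /filter_In[k_L _]; exact: L_in.
  - by have := IZR_lt 0 q q_gt0; lra.
rewrite d_eq mult_IZR; have := IZR_lt 0 g g_gt0; nra.
Qed.

Definition Rleb (x y : R) : bool := if Rle_dec x y then true else false.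

Lemma RlebP x y : reflect (x <= y) (Rleb x y).
Proof. by rewrite /Rleb; case: Rle_dec => ?; constructor. Qed.

Lemma zrange_sorted M : StronglySorted Z.lt (zrange M).
Proof.
rewrite /zrange; elim: (Z.to_nat _) 0%nat => [|n IHn] s /=; first by constructor.
constructor; first exact: IHn.
by apply/Forall_forall => k /in_map_iff[j [<- /in_seq j_range]]; lia.
Qed.

Lemma gcd_le_sum_divisors (n : Z) (m : nat) (T : R) (D : list nat) :
  (0 < m)%nat -> (forall d, In d D <-> (Z.of_nat d | Z.of_nat m)%Z) ->
  IZR (Z.gcd n (Z.of_nat m)) <= T ->
  IZR (Z.gcd n (Z.of_nat m)) <=
    sumR (fun d => if (n mod Z.of_nat d =? 0)%Z then INR d else 0)
      (filter (fun d => Rleb (INR d) T) D).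
Proof.
move=> m_gt0 D_spec g_le_T; set g := Z.gcd n (Z.of_nat m).
have g_gt0 : (0 < g)%Z by apply: Z_gcd_pos_r; lia.
have g_eq : Z.of_nat (Z.to_nat g) = g by apply: Z2Nat.id; lia.
have -> : IZR g = if (n mod Z.of_nat (Z.to_nat g) =? 0)%Z then INR (Z.to_nat g) else 0.
  rewrite g_eq INR_IZR_INZ g_eq.
  by have /Z.eqb_eq -> : (n mod g = 0)%Z by apply/Z.mod_divide; [lia | exact: Z.gcd_divide_l].
apply: sumR_ge_elem.
  by move=> d _; case: (_ =? _)%Z; [exact: pos_INR | lra].
apply/filter_In; split; first by apply/D_spec; rewrite g_eq; exact: Z.gcd_divide_r.
by apply/RlebP; rewrite INR_IZR_INZ g_eq.
Qed.

Lemma gcd_sum_le_num_divisors (m : nat) (K T : R) (A B : Z) (D : list nat) :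
  (0 < m)%nat -> 0 <= K -> K <= T -> (forall d, In d D <-> (Z.of_nat d | Z.of_nat m)%Z) ->
  gcd_sum m K T A B <= 3 * INR (length D) * IZR (Z.gcd A (Z.of_nat m)) * T.
Proof.
move=> m_gt0 K_ge0 K_le_T D_spec.
set G := Z.gcd A (Z.of_nat m); set DT := filter (fun d => Rleb (INR d) T) D.
have G_gt0 : (0 < G)%Z by apply: Z_gcd_pos_r; lia.
rewrite /gcd_sum; set L := filter _ _; rewrite -/(sumR _ L).
have L_sorted : StronglySorted Z.lt L by apply/StronglySorted_filter/zrange_sorted.
have L_in k : In k L -> -K <= IZR k <= K /\ IZR (Z.gcd (A * k + B) (Z.of_nat m)) <= T.
  case/filter_In => _; case: Rle_dec => // k_le_K; case: Rle_dec => // g_le_T _.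
  by rewrite abs_IZR in k_le_K; split => //; split_Rabs; lra.
apply: (Rle_trans _ (sumR (fun k => sumR (fun d =>
  if ((A * k + B) mod Z.of_nat d =? 0)%Z then INR d else 0) DT) L)).
  by apply: sumR_le => k k_L; apply: gcd_le_sum_divisors => //; exact: (proj2 (L_in k k_L)).
rewrite sumR_swap; apply: (Rle_trans _ (INR (length DT) * (3 * IZR G * T))).
  apply: sumR_le_const => d /filter_In[d_D /RlebP d_le_T]; rewrite sumR_indicator.
  have d_m : (Z.of_nat d | Z.of_nat m)%Z by apply/D_spec.
  have d_gt0 : (0 < Z.of_nat d)%Z.
    by case: d_m => z; case: (d) => [|?] /=; lia.
  have gd_le_G : (Z.gcd A (Z.of_nat d) <= G)%Z.
    apply: Z.divide_pos_le => //; apply: Z.gcd_greatest; first exact: Z.gcd_divide_l.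
    exact: Z.divide_trans (Z.gcd_divide_r _ _) d_m.
  have := linear_congruence_count A B _ K L d_gt0 K_ge0 L_sorted (fun k k_L => proj1 (L_in k k_L)).
  have G_ge1 : 1 <= IZR G by apply: IZR_le; lia.
  have := IZR_le _ _ (Z.gcd_nonneg A (Z.of_nat d)); have := IZR_le _ _ gd_le_G.
  rewrite -INR_IZR_INZ; nra.
have : INR (length DT) <= INR (length D) by apply/le_INR/filter_length_le.
have : 0 <= 3 * IZR G * T by have := IZR_lt 0 G G_gt0; nra.
nra.
Qed.

Theorem lemma15 :
  forall eps : R, 0 < eps ->
  exists C : R, 0 < C /\
    forall (m : nat) (K T : R) (A B : Z),
      (1 <= m)%nat -> 0 < K -> 0 < T -> K <= T -> A <> 0%Z ->
      gcd_sum m K T A B <=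
        C * Rpower (INR m) eps * IZR (Z.gcd A (Z.of_nat m)) * T.
Proof.
move=> eps eps_gt0; have [C [C_gt0 divisor_le]] := DivisorBound.divisor_bound eps eps_gt0.
exists (3 * C); split; first lra.
move=> m K T A B m_gt0 K_gt0 T_gt0 K_le_T _.
apply: (Rle_trans _ _ _ (gcd_sum_le_num_divisors m K T A B (prime.divisors m) m_gt0 (Rlt_le _ _ K_gt0) K_le_T
  (fun d => DivisorBound.In_divisors m d m_gt0))).
rewrite DivisorBound.length_size.
have GT_ge0 : 0 <= IZR (Z.gcd A (Z.of_nat m)) * T.
  by have := IZR_le _ _ (Z.gcd_nonneg A (Z.of_nat m)); nra.
have := Rmult_le_compat_r _ _ _ GT_ge0 (divisor_le m m_gt0); lra.
Qed.
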